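(* Let $\alpha,\beta,\gamma\in\Phi^+$ and $w\in W$ with \[\ell(s_\alpha s_\beta s_\gamma w)=\ell(s_\beta s_\gamma w)-1=\ell(s_\gamma w)-2=\ell(w)-3.\] If $(\alpha,\beta)\ne0$ or $(\alpha,\gamma)\neq0$, then there exist $\alpha',\beta',\gamma'\in\Phi^+$ with $(\beta',\gamma')\ne0$, $s_\alpha s_\beta s_\gamma=s_{\alpha'}s_{\beta'}s_{\gamma'}$, and \[\ell(s_{\alpha'}s_{\beta'}s_{\gamma'}w)=\ell(s_{\beta'}s_{\gamma'}w)-1=\ell(s_{\gamma'}w)-2=\ell(w)-3.\]
   Context: $\Phi$ is the (finite, crystallographic) root system of a complex semisimple Lie algebra, $\Phi^+$ its positive roots with respect to a fixed basis, $W$ the Weyl group with length function $\ell$, $(\cdot,\cdot)$ a $W$-invariant scalar product, and $s_\beta$ the reflection in $\beta$. *)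

(* Root systems realised in the Euclidean space R^n
   (column vectors over an arbitrary real field R) with the standard
   scalar product, which is W-invariant. *)
From HB Require Import structures.
From mathcomp Require Import all_boot all_order all_algebra.
Set Implicit Arguments. Unset Strict Implicit. Unset Printing Implicit Defensive.
Import Order.TTheory GRing.Theory Num.Theory.
Local Open Scope ring_scope.

Section RootSystems.
Variables (R : realFieldType) (n : nat).

Definition dot (u v : 'cV[R]_n) : R := (u^T *m v) 0 0.

Definition refl (a : 'cV[R]_n) : 'M[R]_n :=
  1%:M - (2 / dot a a) *: (a *m a^T).

(* Phi is a (reduced, crystallographic) root system spanning R^n
   (semisimple case). Phi is a finite list. *)
Definition root_system (Phi : seq 'cV[R]_n) : Prop :=
  [/\ (0 \notin Phi),
      (forall v : 'cV[R]_n, exists c : 'I_(size Phi) -> R,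
          v = \sum_(i < size Phi) c i *: Phi`_i),
      (forall a b, a \in Phi -> b \in Phi -> refl a *m b \in Phi),
      (forall a b, a \in Phi -> b \in Phi ->
          exists z : int, 2 * dot a b / dot a a = z%:~R) &
      (forall a (c : R), a \in Phi -> c *: a \in Phi -> c = 1 \/ c = -1)].

Definition is_base (Phi Delta : seq 'cV[R]_n) : Prop :=
  [/\ {subset Delta <= Phi},
      (forall c : 'I_(size Delta) -> R,
          \sum_(i < size Delta) c i *: Delta`_i = 0 -> forall i, c i = 0) &
      (forall a, a \in Phi -> exists c : 'I_(size Delta) -> int,
          a = \sum_(i < size Delta) (c i)%:~R *: Delta`_i /\
          ((forall i, 0 <= c i) \/ (forall i, c i <= 0)))].

Definition pos_root (Phi Delta : seq 'cV[R]_n) (a : 'cV[R]_n) : Prop :=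
  a \in Phi /\ exists c : 'I_(size Delta) -> int,
    a = \sum_(i < size Delta) (c i)%:~R *: Delta`_i /\ (forall i, 0 <= c i).

Definition refl_word (s : seq 'cV[R]_n) : 'M[R]_n :=
  foldr (fun a M => refl a *m M) 1%:M s.

Definition in_weyl (Phi : seq 'cV[R]_n) (w : 'M[R]_n) : Prop :=
  exists s : seq 'cV[R]_n, {subset s <= Phi} /\ w = refl_word s.

Definition weyl_len (Delta : seq 'cV[R]_n) (w : 'M[R]_n) (k : nat) : Prop :=
  (exists s : seq 'cV[R]_n, [/\ size s = k, {subset s <= Delta} & w = refl_word s])
  /\ (forall s : seq 'cV[R]_n, {subset s <= Delta} -> w = refl_word s -> (k <= size s)%N).

End RootSystems.

From HB Require Import structures.
From mathcomp Require Import all_boot all_order all_algebra.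
From mathcomp Require Import zify ring lra.
Set Implicit Arguments. Unset Strict Implicit. Unset Printing Implicit Defensive.
Import Order.TTheory GRing.Theory Num.Theory.
Local Open Scope ring_scope.

(* Put [V = w^-1 = w^T].  By the exchange property, for a positive root [g],
   [l(s_g X) < l(X)] exactly when [X^-1 g] is a negative root.  Hence the
   hypothesis says that [V c], [V (s_c b)] and [V (s_c s_b a)] are negative
   roots, and conversely such a triple, together with [l(w) = k + 3] and
   [l(s_a s_b s_c w) = k], gives back the whole chain of lengths.
   If [(b, c) <> 0] there is nothing to do, and if [(a, b) = 0] or [(a, c) = 0]
   two reflections commute.  Otherwise [(b, c) = 0] and [s_a s_b s_c] equals
   [s_(s_a b) s_a s_c], [s_(s_a c) s_a s_b], [s_b s_(s_b a) s_c] and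
   [s_c s_(s_c a) s_b]; a case analysis on the signs of [(a, b)], [(a, c)], of
   the roots [s_b a], [s_c a], [V (s_b a)], [V (s_c a)], and on the Cartan
   products [<a, b^vee> <b, a^vee>] and [<a, c^vee> <c, a^vee>] (each [1] or
   at least [2]) shows that one of these keeps the three roots negative.
   When both products are at least [2], Bessel's inequality puts [a] in the
   plane of [b] and [c], which settles the last case. *)

Section ScalarProduct.
Variables (R : realFieldType) (n : nat).
Implicit Types (u v x a b c : 'cV[R]_n) (M N : 'M[R]_n).

Lemma dotE u v : dot u v = \sum_i u i 0 * v i 0.
Proof. by rewrite /dot !mxE; apply: eq_bigr => i _; rewrite mxE. Qed.

Lemma dotC u v : dot u v = dot v u.
Proof. by rewrite !dotE; apply: eq_bigr => i _; rewrite mulrC. Qed.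

Lemma dotDl u v x : dot (u + v) x = dot u x + dot v x.
Proof. by rewrite !dotE -big_split; apply: eq_bigr => i _; rewrite mxE mulrDl. Qed.

Lemma dotZl k u x : dot (k *: u) x = k * dot u x.
Proof. by rewrite !dotE mulr_sumr; apply: eq_bigr => i _; rewrite mxE mulrA. Qed.

Lemma dotBl u v x : dot (u - v) x = dot u x - dot v x.
Proof. by rewrite dotDl -scaleN1r dotZl mulN1r. Qed.

Lemma dotZr k u x : dot x (k *: u) = k * dot x u.
Proof. by rewrite !(dotC x) dotZl. Qed.

Lemma dotBr u v x : dot x (u - v) = dot x u - dot x v.
Proof. by rewrite !(dotC x) dotBl. Qed.

Lemma dotvv_ge0 u : 0 <= dot u u.
Proof. by rewrite dotE sumr_ge0 // => i _; rewrite -expr2 sqr_ge0. Qed.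

Lemma dotvv_eq0 u : (dot u u == 0) = (u == 0).
Proof.
apply/idP/eqP => [|->]; last by rewrite dotE big1 // => i _; rewrite mxE mul0r.
rewrite dotE psumr_eq0 => [/allP u0|i _]; last by rewrite -expr2 sqr_ge0.
apply/matrixP => i j; rewrite (ord1 j) mxE.
by have /implyP/(_ isT) := u0 i (mem_index_enum i); rewrite mulf_eq0 orbb => /eqP.
Qed.

Lemma dotvv_gt0 u : u != 0 -> 0 < dot u u.
Proof. by move=> u0; rewrite lt0r dotvv_eq0 u0 dotvv_ge0. Qed.

Lemma dot_mull M u v : dot (M *m u) v = dot u (M^T *m v).
Proof. by rewrite /dot trmx_mul mulmxA. Qed.

Lemma mx_colP M N : (forall u, M *m u = N *m u) -> M = N.
Proof.
move=> MN; apply/matrixP => i j.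
by have /matrixP/(_ i 0) := MN (delta_mx j 0); rewrite -!colE !mxE.
Qed.

Lemma dot_orth_residual a b c : b != 0 -> c != 0 -> dot b c = 0 ->
  let r := a - (dot a b / dot b b) *: b - (dot a c / dot c c) *: c in
  dot a b ^+ 2 / dot b b + dot a c ^+ 2 / dot c c + dot r r = dot a a.
Proof.
rewrite -!dotvv_eq0 => b0 c0 bc r.
rewrite /r !(dotBl, dotBr, dotZl, dotZr) (dotC c b) bc (dotC b a) (dotC c a).
by field; apply/andP.
Qed.

End ScalarProduct.

Section Reflections.
Variables (R : realFieldType) (n : nat).
Implicit Types (u v x a b c : 'cV[R]_n) (M X : 'M[R]_n).

Definition cartan u v : R := 2 * dot u v / dot v v.

Lemma reflE a x : refl a *m x = x - cartan x a *: a.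
Proof.
rewrite /refl /cartan mulmxBl mul1mx -scalemxAl -mulmxA.
rewrite [a^T *m x]mx11_scalar mul_mx_scalar scalerA dotC.
by congr (_ - _ *: _); rewrite /dot mulrAC.
Qed.

Lemma trmx_refl a : (refl a)^T = refl a.
Proof. by rewrite /refl linearB /= trmx1 linearZ /= trmx_mul trmxK. Qed.

Lemma dot_refll a u v : dot (refl a *m u) v = dot u (refl a *m v).
Proof. by rewrite dot_mull trmx_refl. Qed.

Lemma trmx_refl_mulmx a X u : (refl a *m X)^T *m u = X^T *m (refl a *m u).
Proof. by rewrite trmx_mul trmx_refl mulmxA. Qed.

Lemma refl_id a u : dot u a = 0 -> refl a *m u = u.
Proof. by move=> ua; rewrite reflE /cartan ua mulr0 mul0r scale0r subr0. Qed.

Lemma cartanNl u v : cartan (- u) v = - cartan u v.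
Proof. by rewrite /cartan -scaleN1r dotZl mulN1r mulrN mulNr. Qed.

Lemma cartan_gt0 u v : v != 0 -> (0 < cartan u v) = (0 < dot u v).
Proof. by move=> v0; rewrite /cartan pmulr_lgt0 ?invr_gt0 ?dotvv_gt0 // pmulr_rgt0. Qed.

Lemma cartan_lt0 u v : v != 0 -> (cartan u v < 0) = (dot u v < 0).
Proof. by move=> v0; rewrite -oppr_gt0 -cartanNl cartan_gt0 // -scaleN1r dotZl mulN1r oppr_gt0. Qed.

Lemma cartan_mul_gt0 a b : a != 0 -> b != 0 -> dot a b != 0 ->
  0 < cartan a b * cartan b a.
Proof.
move=> a0 b0; rewrite (dotC a b); case: (ltrgtP (dot b a) 0) => // ab _.
  by rewrite nmulr_rgt0 cartan_lt0 // dotC.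
by rewrite mulr_gt0 // cartan_gt0 // dotC.
Qed.

Lemma refl_opp_swap a b : cartan a b = 1 -> cartan b a = 1 ->
  refl a *m b = - (refl b *m a).
Proof. by move=> ab ba; rewrite !reflE ab ba !scale1r opprB. Qed.

(* Bessel's inequality for [b] orthogonal to [c]: the two Cartan products add up
   to at most [4], with equality only if [a] lies in the plane of [b] and [c]. *)
Lemma cartan_orth_bound a b c : a != 0 -> b != 0 -> c != 0 -> dot b c = 0 ->
  2 <= cartan a b * cartan b a -> 2 <= cartan a c * cartan c a ->
  cartan a b * cartan b a = 2 /\ a = (cartan a b / 2) *: b + (cartan a c / 2) *: c.
Proof.
move=> a0 b0 c0 bc; have /= := dot_orth_residual a b0 c0 bc.
set r := _ - _ - _; set u := _ / dot b b; set v := _ / dot c c => Bessel.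
have A0 := dotvv_gt0 a0; have := A0; rewrite lt0r => /andP[A0' _].
have B0 : dot b b != 0 by rewrite dotvv_eq0.
have C0 : dot c c != 0 by rewrite dotvv_eq0.
have -> : cartan a b * cartan b a = 4 * u / dot a a.
  by rewrite /cartan /u (dotC b a); field; apply/andP.
have -> : cartan a c * cartan c a = 4 * v / dot a a.
  by rewrite /cartan /v (dotC c a); field; apply/andP.
rewrite !ler_pdivlMr // => hu hv.
have r0 : dot r r = 0 by have := dotvv_ge0 r; lra.
have -> : 4 * u = 2 * dot a a by have := dotvv_ge0 r; lra.
split; first by rewrite mulfK.
have -> : cartan a b / 2 = dot a b / dot b b by rewrite /cartan; field.
have -> : cartan a c / 2 = dot a c / dot c c by rewrite /cartan; field.
by apply/eqP; rewrite addrC -subr_eq -subr_eq0 -dotvv_eq0 -/r r0.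
Qed.

Variable a : 'cV[R]_n.
Hypothesis a0 : a != 0.

Lemma cartan_vv : cartan a a = 2.
Proof. by rewrite /cartan mulfK // dotvv_eq0. Qed.

Lemma refl_vv : refl a *m a = - a.
Proof. by rewrite reflE cartan_vv scaler_nat mulr2n opprD addNKr. Qed.

Lemma reflK u : refl a *m (refl a *m u) = u.
Proof.
rewrite [refl a *m u]reflE mulmxBr -scalemxAr refl_vv scalerN opprK.
by rewrite reflE subrK.
Qed.

Lemma refl_sqr : refl a *m refl a = 1%:M.
Proof. by apply: mx_colP => u; rewrite -mulmxA reflK mul1mx. Qed.

Lemma refl_mulmxK M : refl a *m (refl a *m M) = M.
Proof. by rewrite mulmxA refl_sqr mul1mx. Qed.

Lemma dot_refl u v : dot (refl a *m u) (refl a *m v) = dot u v.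
Proof. by rewrite dot_refll reflK. Qed.

Lemma cartan_refl u v : cartan (refl a *m u) (refl a *m v) = cartan u v.
Proof. by rewrite /cartan !dot_refl. Qed.

Lemma refl_conj b : b != 0 -> refl (refl a *m b) = refl a *m refl b *m refl a.
Proof.
move=> b0; apply: mx_colP => x; rewrite -!mulmxA.
rewrite -{1}(reflK x) reflE cartan_refl [refl b *m _]reflE.
by rewrite mulmxBr -scalemxAr.
Qed.

Lemma refl_comm b : b != 0 -> dot a b = 0 -> refl a *m refl b = refl b *m refl a.
Proof.
move=> b0 ab; have {2}-> : refl b = refl (refl a *m b) by rewrite refl_id // dotC.
by rewrite refl_conj // -mulmxA refl_sqr mulmx1.
Qed.

Lemma refl_reflE b : refl (refl a *m b) *m a = a + cartan a b *: (refl a *m b).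
Proof.
rewrite reflE -{2}(reflK a) cartan_refl refl_vv cartanNl.
by rewrite scaleNr opprK.
Qed.

End Reflections.

Section Roots.
Variables (R : realFieldType) (n : nat) (Phi Delta : seq 'cV[R]_n).
Hypothesis HPhi : root_system Phi.
Hypothesis HDelta : is_base Phi Delta.
Implicit Types (u v a b g : 'cV[R]_n).

Local Notation pos := (pos_root Phi Delta).

Definition cone u := exists2 c : 'I_(size Delta) -> R,
  forall i, 0 <= c i & u = \sum_(i < size Delta) c i *: Delta`_i.

Lemma coneD u v : cone u -> cone v -> cone (u + v).
Proof.
move=> [c c0 ->] [d d0 ->]; exists (fun i => c i + d i) => [i|].
  by rewrite addr_ge0.
by rewrite -big_split; apply: eq_bigr => i _; rewrite scalerDl.
Qed.

Lemma coneZ k u : 0 <= k -> cone u -> cone (k *: u).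
Proof.
move=> k0 [c c0 ->]; exists (fun i => k * c i) => [i|]; first by rewrite mulr_ge0.
by rewrite scaler_sumr; apply: eq_bigr => i _; rewrite scalerA.
Qed.

Lemma cone_oppDZ u v k : cone (- u) -> cone (- v) -> 0 <= k -> cone (- (u + k *: v)).
Proof. by move=> un vn k0; rewrite opprD -scalerN; apply: coneD => //; apply: coneZ. Qed.

Lemma cone_oppZ k u : k <= 0 -> cone u -> cone (- (k *: u)).
Proof. by move=> k0 uc; rewrite -scaleNr; apply: coneZ; rewrite ?oppr_ge0. Qed.

Lemma base_coef_eq0 (c : 'I_(size Delta) -> R) :
  \sum_(i < size Delta) c i *: Delta`_i = 0 -> forall i, c i = 0.
Proof. by case: HDelta => _ + _; apply. Qed.

Lemma cone_sum_coef u v (c d : 'I_(size Delta) -> R) :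
  (forall i, 0 <= c i) -> (forall i, 0 <= d i) ->
  u = \sum_(i < size Delta) c i *: Delta`_i ->
  v = \sum_(i < size Delta) d i *: Delta`_i ->
  forall e : 'I_(size Delta) -> R, u + v = \sum_(i < size Delta) e i *: Delta`_i ->
  forall i, e i = 0 -> c i = 0.
Proof.
move=> c0 d0 -> -> e uv i ei0.
have cde j : c j + d j - e j = 0.
  apply: (base_coef_eq0 (c := fun j => c j + d j - e j)).
  under eq_bigr do rewrite scalerBl scalerDl.
  by rewrite sumrB big_split -uv subrr.
by move/eqP: (cde i); rewrite ei0 subr0 paddr_eq0 // => /andP[/eqP].
Qed.

Lemma cone_anti u : cone u -> cone (- u) -> u = 0.
Proof.
move=> [c c0 uE] [d d0 vE].
have uv : u + - u = \sum_(i < size Delta) 0 *: Delta`_i.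
  by rewrite subrr big1 // => i _; rewrite scale0r.
rewrite uE big1 // => i _.
by rewrite (cone_sum_coef c0 d0 uE vE uv) ?scale0r.
Qed.

Lemma cone_int (c : 'I_(size Delta) -> int) : (forall i, 0 <= c i) ->
  cone (\sum_(i < size Delta) (c i)%:~R *: Delta`_i).
Proof. by move=> c0; exists (fun i => (c i)%:~R) => // i; rewrite ler0z. Qed.

Lemma cone_opp_int (c : 'I_(size Delta) -> int) : (forall i, c i <= 0) ->
  cone (- \sum_(i < size Delta) (c i)%:~R *: Delta`_i).
Proof.
move=> c0; exists (fun i => - (c i)%:~R) => [i|]; first by rewrite oppr_ge0 lerz0.
by rewrite -sumrN; apply: eq_bigr => i _; rewrite scaleNr.
Qed.

Lemma pos_root_cone a : pos a -> cone a.
Proof. by move=> [_ [c [-> c0]]]; apply: cone_int. Qed.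

Lemma pos_root_in a : pos a -> a \in Phi.
Proof. by case. Qed.

Lemma root_neq0 a : a \in Phi -> a != 0.
Proof. by case: HPhi => Phi0 _ _ _ _ aPhi; apply: contraNneq Phi0 => <-. Qed.

Lemma pos_root_neq0 a : pos a -> a != 0.
Proof. by move/pos_root_in/root_neq0. Qed.

Lemma root_refl a b : a \in Phi -> b \in Phi -> refl a *m b \in Phi.
Proof. by case: HPhi => _ _ + _ _; apply. Qed.

Lemma cartan_int a b : a \in Phi -> b \in Phi -> exists z : int, cartan a b = z%:~R.
Proof. by case: HPhi => _ _ _ + _ aPhi bPhi; rewrite /cartan dotC; apply. Qed.

Lemma root_scale a k : a \in Phi -> k *: a \in Phi -> k = 1 \/ k = -1.
Proof. by case: HPhi => _ _ _ _; apply. Qed.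

Lemma cartan_mul_cases a b : a \in Phi -> b \in Phi -> dot a b != 0 ->
  cartan a b * cartan b a = 1 \/ 2 <= cartan a b * cartan b a.
Proof.
move=> aPhi bPhi ab; have := cartan_mul_gt0 (root_neq0 aPhi) (root_neq0 bPhi) ab.
have [z1 ->] := cartan_int aPhi bPhi; have [z2 ->] := cartan_int bPhi aPhi.
rewrite -intrM ltr0z => z12; have [->|z2le] : z1 * z2 = 1 \/ 2 <= z1 * z2 by lia.
  by left.
by right; rewrite -(ler_int R) in z2le.
Qed.

Lemma cartan_mul_eq1 a b : a \in Phi -> b \in Phi ->
  cartan a b * cartan b a = 1 -> 0 < cartan a b -> cartan a b = 1 /\ cartan b a = 1.
Proof.
move=> aPhi bPhi.
have [z1 ->] := cartan_int aPhi bPhi; have [z2 ->] := cartan_int bPhi aPhi.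
rewrite -intrM -[1]/(1%:~R) => /intr_inj z12 /[!ltr0z] z1gt0.
have /orP[/eqP z2E|/eqP z2E] := intUnitRing.unitzPl z12; rewrite z2E in z12.
  by rewrite mulr1 in z12; rewrite z12 z2E.
by rewrite mulrN1 in z12; rewrite -[z1]opprK z12 in z1gt0.
Qed.

Lemma root_cone_cases a : a \in Phi -> cone a \/ cone (- a).
Proof.
case: HDelta => _ _ /[apply] -[c [-> [c0|c0]]].
  by left; apply: cone_int.
by right; apply: cone_opp_int.
Qed.

Lemma root_cone_opp a : a \in Phi -> cone a -> ~ cone (- a).
Proof. by move=> /root_neq0 a0 /cone_anti aK /aK a_eq0; rewrite a_eq0 eqxx in a0. Qed.

Lemma pos_rootP a : a \in Phi -> cone a -> pos a.
Proof.
move=> aPhi ac; split=> //.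
case: HDelta => _ _ /(_ a aPhi) [c [aE [c0|c0]]]; first by exists c.
by case: (root_cone_opp aPhi ac); rewrite aE; apply: cone_opp_int.
Qed.

Lemma pos_refl_cartan_le0 a b : pos a -> pos b -> cartan b a <= 0 -> pos (refl a *m b).
Proof.
move=> apos bpos ba; apply: pos_rootP; first by rewrite root_refl ?pos_root_in.
rewrite reflE -scaleNr.
apply: coneD; first exact: pos_root_cone.
by apply: coneZ; [rewrite oppr_ge0 | exact: pos_root_cone].
Qed.

Lemma simple_root_in al : al \in Delta -> al \in Phi.
Proof. by case: HDelta => + _ _; apply. Qed.

(* Were [s_al g] negative, the nonnegative combinations [g] and [- s_al g] would add
   up to a multiple of [al], so by independence [g] itself would be one. *)
Lemma refl_simple_pos al g : al \in Delta -> pos g -> g != al -> pos (refl al *m g).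
Proof.
move=> alD gpos gal; have alPhi := simple_root_in alD.
have gPhi := pos_root_in gpos.
have sgPhi := root_refl alPhi gPhi.
have [//|sgneg] := root_cone_cases sgPhi; first exact: pos_rootP.
have [c c0 gE] := pos_root_cone gpos; have [d d0 sgE] := sgneg.
have Jlt : (index al Delta < size Delta)%N by rewrite index_mem.
pose J := Ordinal Jlt; have alJ : Delta`_J = al by rewrite nth_index.
have line : g + - (refl al *m g)
    = \sum_(i < size Delta) (if i == J then cartan g al else 0) *: Delta`_i.
  rewrite (bigD1 J) //= eqxx alJ big1 ?addr0 => [|i /negbTE->]; last by rewrite scale0r.
  by rewrite reflE opprB addrC subrK.
have gE' : g = c J *: al.
  rewrite gE (bigD1 J) //= alJ big1 ?addr0 // => i iJ.
  by rewrite (cone_sum_coef c0 d0 gE sgE line) ?scale0r // (negbTE iJ).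
have [cJ1|cJm1] : c J = 1 \/ c J = -1 by apply: root_scale alPhi _; rewrite -gE'.
  by move: gal; rewrite gE' cJ1 scale1r eqxx.
by move: (c0 J); rewrite cJm1 oppr_ge0 ler10.
Qed.

End Roots.

Section Length.
Variables (R : realFieldType) (n : nat) (Phi Delta : seq 'cV[R]_n).
Hypothesis HPhi : root_system Phi.
Hypothesis HDelta : is_base Phi Delta.
Implicit Types (g : 'cV[R]_n) (X : 'M[R]_n).

Local Notation pos := (pos_root Phi Delta).
Local Notation cone := (cone Delta).

Lemma word_trmx_root s r : {subset s <= Phi} -> r \in Phi -> (refl_word s)^T *m r \in Phi.
Proof.
elim: s r => [|x s IHs] r /= sPhi rPhi; first by rewrite trmx1 mul1mx.
rewrite trmx_refl_mulmx IHs => [//|y ys|]; first by apply: sPhi; rewrite inE ys orbT.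
by rewrite root_refl // sPhi ?mem_head.
Qed.

Lemma exchange s g : {subset s <= Delta} -> pos g -> cone (- ((refl_word s)^T *m g)) ->
  exists s', [/\ {subset s' <= Delta}, size s = (size s').+1 &
                 refl g *m refl_word s = refl_word s'].
Proof.
elim: s g => [|al s IHs] g /= sD gpos.
  rewrite trmx1 mul1mx.
  by move/(root_cone_opp HPhi HDelta (pos_root_in gpos) (pos_root_cone gpos)).
rewrite trmx_refl_mulmx => gneg.
have alD : al \in Delta by apply: sD; rewrite mem_head.
have s_D : {subset s <= Delta} by move=> y ys; apply: sD; rewrite inE ys orbT.
have al0 : al != 0 := root_neq0 HPhi (simple_root_in HDelta alD).
have [->|gal] := eqVneq g al; first by exists s; rewrite refl_mulmxK.
have [s' [s'D -> sE]] := IHs _ s_D (refl_simple_pos HPhi HDelta alD gpos gal) gneg.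
exists (al :: s'); split=> // [y|]; first by rewrite inE => /predU1P[->|/s'D].
have g0 : g != 0 := pos_root_neq0 HPhi gpos.
by rewrite /= -sE refl_conj // !mulmxA refl_sqr // mul1mx.
Qed.

Definition has_word X k :=
  exists s, [/\ size s = k, {subset s <= Delta} & X = refl_word s].

Lemma has_word_refl X k g : has_word X k.+1 -> pos g -> cone (- (X^T *m g)) ->
  has_word (refl g *m X) k.
Proof.
move=> [s [sk sD ->]] gpos gneg; have [s' [s'D s's sE]] := exchange sD gpos gneg.
by exists s'; split=> //; apply/eqP; rewrite -eqSS -s's sk.
Qed.

Lemma weyl_len_refl X k g : weyl_len Delta (refl g *m X) k -> pos g ->
  cone (- (X^T *m g)) -> has_word X k.+1 -> weyl_len Delta X k.+1.
Proof.
move=> [_ minl] gpos gneg Xw; split=> // s sD Xs.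
rewrite Xs in gneg; have [s' [s'D -> sE]] := exchange sD gpos gneg.
by rewrite ltnS minl // Xs.
Qed.

Lemma weyl_len_drop X m k g : weyl_len Delta X k -> weyl_len Delta (refl g *m X) m ->
  (m < k)%N -> pos g -> cone (- (X^T *m g)).
Proof.
move=> [[s [_ sD Xs]] minl] [[t [tm tD Yt]] _] mk gpos.
have gPhi := pos_root_in gpos; have g0 := root_neq0 HPhi gPhi.
have XgPhi : X^T *m g \in Phi.
  by rewrite Xs word_trmx_root // => y /sD /(simple_root_in HDelta).
have [Xg|//] := root_cone_cases HDelta XgPhi.
have tneg : cone (- ((refl_word t)^T *m g)).
  by rewrite -Yt trmx_refl_mulmx refl_vv // mulmxN opprK.
have [t' [t'D tt' tE]] := exchange tD gpos tneg.
have := minl t' t'D; rewrite -tE -Yt refl_mulmxK // => /(_ erefl).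
by rewrite leqNgt (leq_trans _ mk) // -tm tt'.
Qed.

End Length.

Section Descent.
Variables (R : realFieldType) (n : nat) (Phi Delta : seq 'cV[R]_n) (V : 'M[R]_n).
Hypothesis HPhi : root_system Phi.
Hypothesis HDelta : is_base Phi Delta.
Implicit Types (a b c : 'cV[R]_n).

Local Notation pos := (pos_root Phi Delta).
Local Notation cone := (cone Delta).

(* For [V = w^T = w^-1]: [s_c w], [s_b s_c w], [s_a s_b s_c w] each lose one unit of length. *)
Definition descent_triple a b c :=
  [/\ [/\ pos a, pos b & pos c], cone (- (V *m c)),
      cone (- (V *m (refl c *m b))) & cone (- (V *m (refl c *m (refl b *m a))))].

Definition coupled_factorization a b c := exists a' b' c',
  [/\ descent_triple a' b' c', dot b' c' != 0 &
      refl a *m refl b *m refl c = refl a' *m refl b' *m refl c'].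

Lemma coupled_factorization_id a b c :
  descent_triple a b c -> dot b c != 0 -> coupled_factorization a b c.
Proof. by move=> abc bc; exists a, b, c. Qed.

Lemma descent_triple_swap a b c :
  dot b c = 0 -> descent_triple a b c -> descent_triple a c b.
Proof.
move=> bc [[pa pb pc] nc ncb nz].
have b0 := pos_root_neq0 HPhi pb; have c0 := pos_root_neq0 HPhi pc.
rewrite refl_id // in ncb; split=> //; first by rewrite refl_id // dotC.
by rewrite [refl b *m _]mulmxA (refl_comm b0) // -mulmxA.
Qed.

Lemma coupled_factorization_swap a b c : pos b -> pos c -> dot b c = 0 ->
  coupled_factorization a c b -> coupled_factorization a b c.
Proof.
move=> pb pc bc [a' [b' [c' [abc' bc' E]]]]; exists a', b', c'; split=> //.
by rewrite -E -!mulmxA (refl_comm (pos_root_neq0 HPhi pb)) ?(pos_root_neq0 HPhi pc).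
Qed.

Lemma coupled_factorization_ab0 a b c : dot a b = 0 -> dot a c != 0 ->
  descent_triple a b c -> coupled_factorization a b c.
Proof.
move=> ab ac [[pa pb pc] nc ncb nz].
have a0 := pos_root_neq0 HPhi pa; have b0 := pos_root_neq0 HPhi pb.
exists b, a, c; split=> //; last by rewrite (refl_comm a0).
have sba : refl b *m a = a by rewrite refl_id.
have sab : refl a *m b = b by rewrite refl_id // dotC.
by split=> //; [rewrite -sba | rewrite sab].
Qed.

Section OrthogonalPair.
Variables a b c : 'cV[R]_n.
Hypotheses (abc : descent_triple a b c) (bc : dot b c = 0).

Let pa : pos a. Proof. by case: abc => -[]. Qed.
Let pb : pos b. Proof. by case: abc => -[]. Qed.
Let pc : pos c. Proof. by case: abc => -[]. Qed.
Let a0 : a != 0 := pos_root_neq0 HPhi pa.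
Let b0 : b != 0 := pos_root_neq0 HPhi pb.

Lemma coupled_via_refl_ab : dot a c != 0 -> pos (refl a *m b) ->
  cone (- (V *m (refl c *m a))) -> coupled_factorization a b c.
Proof.
move=> ac pab nca; case: abc => _ nc ncb _.
exists (refl a *m b), a, c; split=> //; first by split; rewrite ?reflK.
by rewrite refl_conj // -!mulmxA refl_mulmxK.
Qed.

Lemma coupled_via_refl_ba : dot a c != 0 -> pos (refl b *m a) ->
  cone (- (V *m b + cartan b a *: (V *m (refl c *m (refl b *m a))))) ->
  coupled_factorization a b c.
Proof.
move=> ac pba nsb; case: abc => _ nc _ nz.
exists b, (refl b *m a), c; split=> //.
- have scb : refl c *m b = b by rewrite refl_id // dotC.
  by split=> //; rewrite refl_reflE // mulmxDr -scalemxAr scb mulmxDr -scalemxAr.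
- by rewrite dot_refll refl_id // dotC.
- by rewrite refl_conj // !mulmxA refl_sqr // mul1mx.
Qed.

End OrthogonalPair.

Lemma coupled_via_refl_ac a b c : descent_triple a b c -> dot b c = 0 ->
  dot a b != 0 -> pos (refl a *m c) -> cone (- (V *m (refl b *m a))) ->
  coupled_factorization a b c.
Proof.
move=> abc bc ab pac nba; have [[_ pb pc] _ _ _] := abc.
apply: (coupled_factorization_swap pb pc bc).
exact: coupled_via_refl_ab (descent_triple_swap bc abc) ab pac nba.
Qed.

Lemma coupled_via_refl_ca a b c : descent_triple a b c -> dot b c = 0 ->
  dot a b != 0 -> pos (refl c *m a) ->
  cone (- (V *m c + cartan c a *: (V *m (refl c *m (refl b *m a))))) ->
  coupled_factorization a b c.
Proof.
move=> abc bc ab pca nsc; have [[_ pb pc] _ _ _] := abc.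
have b0 := pos_root_neq0 HPhi pb; have c0 := pos_root_neq0 HPhi pc.
apply: (coupled_factorization_swap pb pc bc).
have cb : dot c b = 0 by rewrite dotC.
apply: (coupled_via_refl_ba (descent_triple_swap bc abc)) => //.
by rewrite [refl b *m _]mulmxA -(refl_comm c0 b0 cb) -mulmxA.
Qed.

End Descent.

Section SignCases.
Variables (R : realFieldType) (n : nat) (Phi Delta : seq 'cV[R]_n) (V : 'M[R]_n).
Hypothesis HPhi : root_system Phi.
Hypothesis HDelta : is_base Phi Delta.
Hypothesis HV : forall r, r \in Phi -> V *m r \in Phi.
Variables a b c : 'cV[R]_n.
Hypotheses (abc : descent_triple Phi Delta V a b c) (bc : dot b c = 0).
Hypotheses (ab : dot a b != 0) (ac : dot a c != 0).

Local Notation pos := (pos_root Phi Delta).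
Local Notation cone := (cone Delta).
Local Notation coupled := (coupled_factorization Phi Delta V).
Local Notation p := (cartan a b).
Local Notation p' := (cartan b a).
Local Notation q := (cartan a c).
Local Notation q' := (cartan c a).
Local Notation X := (V *m (refl b *m a)).
Local Notation Y := (V *m (refl c *m a)).
Local Notation Z := (V *m (refl c *m (refl b *m a))).

Let pa : pos a. Proof. by case: abc => -[]. Qed.
Let pb : pos b. Proof. by case: abc => -[]. Qed.
Let pc : pos c. Proof. by case: abc => -[]. Qed.
Let aPhi : a \in Phi := pos_root_in pa.
Let bPhi : b \in Phi := pos_root_in pb.
Let cPhi : c \in Phi := pos_root_in pc.
Let a0 : a != 0 := pos_root_neq0 HPhi pa.
Let b0 : b != 0 := pos_root_neq0 HPhi pb.
Let c0 : c != 0 := pos_root_neq0 HPhi pc.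
Let cb : dot c b = 0. Proof. by rewrite dotC. Qed.
Let sbaPhi : refl b *m a \in Phi := root_refl HPhi bPhi aPhi.
Let scaPhi : refl c *m a \in Phi := root_refl HPhi cPhi aPhi.
Let XPhi : X \in Phi := HV sbaPhi.
Let YPhi : Y \in Phi := HV scaPhi.
Let nc : cone (- (V *m c)). Proof. by case: abc. Qed.
Let nb : cone (- (V *m b)). Proof. by case: abc => _ _ + _; rewrite refl_id. Qed.
Let nz : cone (- Z). Proof. by case: abc. Qed.

Let ZX : Z = X - q *: (V *m c).
Proof.
have -> : cartan a c = cartan (refl b *m a) c by rewrite -{2}(refl_id cb) cartan_refl.
by rewrite [refl c *m _]reflE mulmxBr scalemxAr.
Qed.

Let ZY : Z = Y - p *: (V *m b).
Proof.
rewrite [refl c *m _]mulmxA -(refl_comm b0 c0 bc) -mulmxA.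
have -> : cartan a b = cartan (refl c *m a) b by rewrite -{2}(refl_id bc) cartan_refl.
by rewrite [refl b *m _]reflE mulmxBr scalemxAr.
Qed.

Let nX : 0 < q -> cone (- X).
Proof. by move=> q0; rewrite -(subrK (q *: (V *m c)) X) -ZX; exact: cone_oppDZ nz nc (ltW q0). Qed.

Let nY : 0 < p -> cone (- Y).
Proof. by move=> p0; rewrite -(subrK (p *: (V *m b)) Y) -ZY; exact: cone_oppDZ nz nb (ltW p0). Qed.

Let ZY1 : p * p' = 1 -> V *m b + p' *: Z = p' *: Y.
Proof. by move=> pp1; rewrite ZY scalerBr scalerA mulrC pp1 scale1r addrC subrK. Qed.

Let ZX1 : q * q' = 1 -> V *m c + q' *: Z = q' *: X.
Proof. by move=> qq1; rewrite ZX scalerBr scalerA mulrC qq1 scale1r addrC subrK. Qed.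

Lemma coupled_factorization_gt0_gt0 : 0 < dot a b -> 0 < dot a c -> coupled a b c.
Proof.
move=> ab0 ac0.
have p0 : 0 < p by rewrite cartan_gt0.
have q0 : 0 < q by rewrite cartan_gt0.
have p'0 : 0 <= p' by rewrite ltW // cartan_gt0 // dotC.
have q'0 : 0 <= q' by rewrite ltW // cartan_gt0 // dotC.
have [sba|nsba] := root_cone_cases HDelta sbaPhi.
  apply: (coupled_via_refl_ba HPhi abc bc ac (pos_rootP HPhi HDelta sbaPhi sba)).
  exact: cone_oppDZ nb nz p'0.
have [sca|nsca] := root_cone_cases HDelta scaPhi.
  apply: (coupled_via_refl_ca HPhi abc bc ab (pos_rootP HPhi HDelta scaPhi sca)).
  exact: cone_oppDZ nc nz q'0.
have [pp1|pp2] := cartan_mul_cases HPhi aPhi bPhi ab.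
  have [p1 p'1] := cartan_mul_eq1 HPhi aPhi bPhi pp1 p0.
  apply: (coupled_via_refl_ab HPhi abc ac) (nY p0).
  by apply: (pos_rootP HPhi HDelta (root_refl HPhi aPhi bPhi)); rewrite refl_opp_swap.
have [qq1|qq2] := cartan_mul_cases HPhi aPhi cPhi ac.
  have [q1 q'1] := cartan_mul_eq1 HPhi aPhi cPhi qq1 q0.
  apply: (coupled_via_refl_ac HPhi abc bc ab) (nX q0).
  by apply: (pos_rootP HPhi HDelta (root_refl HPhi aPhi cPhi)); rewrite refl_opp_swap.
have [_ aE] := cartan_orth_bound a0 b0 c0 bc pp2 qq2.
have twoA : a + a = p *: b + q *: c.
  by rewrite [in LHS]aE addrACA -!scalerDl -!splitr.
have sbaE : refl b *m a = - (refl c *m a).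
  by apply/eqP; rewrite -addr_eq0 !reflE addrACA -opprD twoA subrr.
by case: (root_cone_opp HPhi HDelta sbaPhi _ nsba); rewrite sbaE.
Qed.

Lemma coupled_factorization_gt0_lt0 : 0 < dot a b -> dot a c < 0 -> coupled a b c.
Proof.
move=> ab0 ac0.
have p0 : 0 < p by rewrite cartan_gt0.
have p'0 : 0 < p' by rewrite cartan_gt0 // dotC.
have q0 : q < 0 by rewrite cartan_lt0.
have q'0 : q' < 0 by rewrite cartan_lt0 // dotC.
have [Xc|nX'] := root_cone_cases HDelta XPhi; last first.
  apply: (coupled_via_refl_ac HPhi abc bc ab _ nX').
  exact: (pos_refl_cartan_le0 HPhi HDelta pa pc (ltW q'0)).
have [sba|nsba] := root_cone_cases HDelta sbaPhi.
  apply: (coupled_via_refl_ba HPhi abc bc ac (pos_rootP HPhi HDelta sbaPhi sba)).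
  exact: cone_oppDZ nb nz (ltW p'0).
have [pp1|pp2] := cartan_mul_cases HPhi aPhi bPhi ab.
  have [p1 p'1] := cartan_mul_eq1 HPhi aPhi bPhi pp1 p0.
  apply: (coupled_via_refl_ab HPhi abc ac) (nY p0).
  by apply: (pos_rootP HPhi HDelta (root_refl HPhi aPhi bPhi)); rewrite refl_opp_swap.
have [qq1|qq2] := cartan_mul_cases HPhi aPhi cPhi ac.
  apply: (coupled_via_refl_ca HPhi abc bc ab (pos_refl_cartan_le0 HPhi HDelta pc pa (ltW q0))).
  by rewrite ZX1 //; apply: cone_oppZ (ltW q'0) Xc.
have [pp2' aE] := cartan_orth_bound a0 b0 c0 bc pp2 qq2.
apply: (coupled_via_refl_ab HPhi abc ac) (nY p0).
apply: (pos_rootP HPhi HDelta (root_refl HPhi aPhi bPhi)).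
have -> : refl a *m b = (- (p' * (q / 2))) *: c.
  have p'p : p' * (p / 2) = 1 by rewrite mulrA (mulrC p') pp2' divff // pnatr_eq0.
  by rewrite reflE {2}aE scalerDr !scalerA p'p scale1r opprD addrA subrr sub0r scaleNr.
apply: coneZ (pos_root_cone pc); rewrite oppr_ge0 pmulr_rle0 // pmulr_lle0 ?invr_gt0 //.
exact: ltW.
Qed.

Lemma coupled_factorization_lt0_lt0 : dot a b < 0 -> dot a c < 0 -> coupled a b c.
Proof.
move=> ab0 ac0.
have p0 : p < 0 by rewrite cartan_lt0.
have p'0 : p' < 0 by rewrite cartan_lt0 // dotC.
have q0 : q < 0 by rewrite cartan_lt0.
have q'0 : q' < 0 by rewrite cartan_lt0 // dotC.
have [Yc|nY'] := root_cone_cases HDelta YPhi; last first.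
  apply: (coupled_via_refl_ab HPhi abc ac _ nY').
  exact: (pos_refl_cartan_le0 HPhi HDelta pa pb (ltW p'0)).
have [Xc|nX'] := root_cone_cases HDelta XPhi; last first.
  apply: (coupled_via_refl_ac HPhi abc bc ab _ nX').
  exact: (pos_refl_cartan_le0 HPhi HDelta pa pc (ltW q'0)).
have [pp1|pp2] := cartan_mul_cases HPhi aPhi bPhi ab.
  apply: (coupled_via_refl_ba HPhi abc bc ac (pos_refl_cartan_le0 HPhi HDelta pb pa (ltW p0))).
  by rewrite ZY1 //; apply: cone_oppZ (ltW p'0) Yc.
have [qq1|qq2] := cartan_mul_cases HPhi aPhi cPhi ac.
  apply: (coupled_via_refl_ca HPhi abc bc ab (pos_refl_cartan_le0 HPhi HDelta pc pa (ltW q0))).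
  by rewrite ZX1 //; apply: cone_oppZ (ltW q'0) Xc.
have [_ aE] := cartan_orth_bound a0 b0 c0 bc pp2 qq2.
case: (root_cone_opp HPhi HDelta aPhi (pos_root_cone pa)).
have half_le0 x : x < 0 -> x / 2 <= 0 by move=> x0; rewrite pmulr_lle0 ?invr_gt0 // ltW.
rewrite aE opprD; apply: coneD; apply: cone_oppZ; rewrite ?half_le0 //.
  exact: pos_root_cone pb.
exact: pos_root_cone pc.
Qed.

End SignCases.

Section Factorization.
Variables (R : realFieldType) (n : nat) (Phi Delta : seq 'cV[R]_n).
Hypothesis HPhi : root_system Phi.
Hypothesis HDelta : is_base Phi Delta.
Implicit Types (a b c : 'cV[R]_n) (w : 'M[R]_n).

Local Notation pos := (pos_root Phi Delta).

Lemma coupled_factorization_bc0 V a b c : (forall r, r \in Phi -> V *m r \in Phi) ->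
  descent_triple Phi Delta V a b c -> dot b c = 0 -> dot a b != 0 -> dot a c != 0 ->
  coupled_factorization Phi Delta V a b c.
Proof.
move=> HV; wlog sgn : b c / ~ (dot a b < 0 /\ 0 < dot a c).
  move=> wlog abc bc ab ac; have [[_ pb pc] _ _ _] := abc.
  case: (boolP ((dot a b < 0) && (0 < dot a c))) => [/andP[abn acp]|sgn]; last first.
    by apply: wlog => // -[abn acp]; rewrite abn acp in sgn.
  apply: (coupled_factorization_swap HPhi pb pc bc).
  apply: wlog (descent_triple_swap HPhi bc abc) _ ac ab; last by rewrite dotC.
  by case=> acn _; move: (lt_trans acn acp); rewrite ltxx.
move=> abc bc ab ac.
case: (ltrgtP (dot a b) 0) => [abn|abp|ab0]; last by rewrite ab0 eqxx in ab.
all: case: (ltrgtP (dot a c) 0) => [acn|acp|ac0]; last by rewrite ac0 eqxx in ac.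
- exact: coupled_factorization_lt0_lt0.
- by case: sgn.
- exact: coupled_factorization_gt0_lt0.
- exact: coupled_factorization_gt0_gt0.
Qed.

Lemma coupled_factorization_exists V a b c : (forall r, r \in Phi -> V *m r \in Phi) ->
  descent_triple Phi Delta V a b c -> dot a b != 0 \/ dot a c != 0 ->
  coupled_factorization Phi Delta V a b c.
Proof.
move=> HV abc abac; have [[_ pb pc] _ _ _] := abc.
have [bc|bc] := eqVneq (dot b c) 0; last exact: coupled_factorization_id.
have [ab|ab] := eqVneq (dot a b) 0.
  have ac : dot a c != 0 by case: abac => //; rewrite ab eqxx.
  exact: (coupled_factorization_ab0 HPhi ab ac abc).
have [ac|ac] := eqVneq (dot a c) 0; last exact: coupled_factorization_bc0.
apply: (coupled_factorization_swap HPhi pb pc bc).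
exact: (coupled_factorization_ab0 HPhi ac ab (descent_triple_swap HPhi bc abc)).
Qed.

Lemma descent_triple_of_weyl_len w k a b c : pos a -> pos b -> pos c ->
  weyl_len Delta (refl a *m refl b *m refl c *m w) k ->
  weyl_len Delta (refl b *m refl c *m w) k.+1 ->
  weyl_len Delta (refl c *m w) k.+2 -> weyl_len Delta w k.+3 ->
  descent_triple Phi Delta w^T a b c.
Proof.
move=> pa pb pc L0 L1 L2 L3; rewrite -!mulmxA in L0 L1.
split=> //; first exact: (weyl_len_drop HPhi HDelta L3 L2 (ltnSn _) pc).
  by rewrite -trmx_refl_mulmx; apply: (weyl_len_drop HPhi HDelta L2 L1 (ltnSn _) pb).
by rewrite -!trmx_refl_mulmx; apply: (weyl_len_drop HPhi HDelta L1 L0 (ltnSn _) pa).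
Qed.

Lemma weyl_len_of_descent_triple w k a b c : descent_triple Phi Delta w^T a b c ->
  weyl_len Delta w k.+3 -> weyl_len Delta (refl a *m refl b *m refl c *m w) k ->
  [/\ weyl_len Delta (refl a *m refl b *m refl c *m w) k,
      weyl_len Delta (refl b *m refl c *m w) k.+1,
      weyl_len Delta (refl c *m w) k.+2 & weyl_len Delta w k.+3].
Proof.
move=> [[pa pb pc] nc ncb nz] L3 L0; rewrite -!mulmxA in L0 *.
rewrite -trmx_refl_mulmx in ncb; rewrite -!trmx_refl_mulmx in nz.
have [W3 _] := L3; have W2 := has_word_refl HPhi HDelta W3 pc nc.
have L1 := weyl_len_refl HPhi HDelta L0 pa nz (has_word_refl HPhi HDelta W2 pb ncb).
by split=> //; apply: (weyl_len_refl HPhi HDelta L1 pb ncb W2).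
Qed.

End Factorization.

Theorem mainTheorem19 (R : realFieldType) (n : nat) (Phi Delta : seq 'cV[R]_n)
  (a b c : 'cV[R]_n) (w : 'M[R]_n) :
  root_system Phi -> is_base Phi Delta ->
  pos_root Phi Delta a -> pos_root Phi Delta b -> pos_root Phi Delta c ->
  in_weyl Phi w ->
  (exists k : nat,
     [/\ weyl_len Delta (refl a *m refl b *m refl c *m w) k,
         weyl_len Delta (refl b *m refl c *m w) k.+1,
         weyl_len Delta (refl c *m w) k.+2 &
         weyl_len Delta w k.+3]) ->
  (dot a b != 0 \/ dot a c != 0) ->
  exists a' b' c' : 'cV[R]_n,
    [/\ pos_root Phi Delta a' /\ pos_root Phi Delta b' /\ pos_root Phi Delta c',
        dot b' c' != 0,
        refl a *m refl b *m refl c = refl a' *m refl b' *m refl c' &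
        exists k : nat,
          [/\ weyl_len Delta (refl a' *m refl b' *m refl c' *m w) k,
              weyl_len Delta (refl b' *m refl c' *m w) k.+1,
              weyl_len Delta (refl c' *m w) k.+2 &
              weyl_len Delta w k.+3]].
Proof.
move=> HPhi HDelta pa pb pc [s [sPhi wE]] [k [L0 L1 L2 L3]] abac.
have HV r : r \in Phi -> w^T *m r \in Phi by rewrite wE; apply: word_trmx_root.
have abc := descent_triple_of_weyl_len HPhi HDelta pa pb pc L0 L1 L2 L3.
have [a' [b' [c' [abc' bc' E]]]] := coupled_factorization_exists HPhi HDelta HV abc abac.
have [[pa' pb' pc'] _ _ _] := abc'.
have L0' : weyl_len Delta (refl a' *m refl b' *m refl c' *m w) k by rewrite -E.
exists a', b', c'; split=> //; exists k.
exact: (weyl_len_of_descent_triple HPhi HDelta abc' L3 L0').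
Qed.
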